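(* Let $m=2h+1\geq 3$ be odd and let $f_1(x)=x+x^{2^{h+1}-1}+x^{2^m-2^{h+1}+1}\in\mathbb{F}_{2^m}[x]$. Let $s^\infty$ be the sequence $s_t=\operatorname{Tr}(f_1(\alpha^t+1))$, $t\ge 0$. Then the binary cyclic code $\mathcal{C}_s$ has parameters $[2^m-1,\,2^m-2-m,\,4]$ and generator polynomial $g_s(x)=(x-1)\,m_{\alpha^{-1}}(x)$.
   Context: Let $m\ge 1$, $v=2^m-1$, $\alpha$ a primitive element of $\mathbb{F}_{2^m}$, and $\operatorname{Tr}(x)=\sum_{i=0}^{m-1}x^{2^i}$ the absolute trace from $\mathbb{F}_{2^m}$ to $\mathbb{F}_2$. For a polynomial $F$ over $\mathbb{F}_{2^m}$ the binary sequence $s^\infty=(s_t)_{t\ge0}$ is defined by $s_t=\operatorname{Tr}(F(\alpha^t+1))$; it is periodic with period dividing $v$. Its minimal polynomial $g_s(x)$ is the polynomial $1+c_1x+\dots+c_Lx^L\in\mathbb{F}_2[x]$ of least degree $L$ such that $s_i+c_1s_{i-1}+\dots+c_Ls_{i-L}=0$ for all $i\ge L$; its degree $L_s$ is the linear span of $s^\infty$. $\mathcal{C}_s$ denotes the binary cyclic code of length $v$ with generator polynomial $g_s(x)$ (so $\dim\mathcal{C}_s=v-L_s$). For an integer $i$, $m_{\alpha^i}(x)$ is the minimal polynomial of $\alpha^i$ over $\mathbb{F}_2$. $[n,k,d]$ denotes length, dimension, minimum Hamming distance. *)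

From HB Require Import structures.
From mathcomp Require Import all_boot all_order all_algebra all_field.
Set Implicit Arguments. Unset Strict Implicit. Unset Printing Implicit Defensive.
Import GRing.Theory.
Local Open Scope ring_scope.

Definition trace_abs (F : finFieldType) (m : nat) (x : F) : F :=
  \sum_(i < m) x ^+ (2 ^ i).

Definition F2_to (F : finFieldType) (b : 'F_2) : F := (nat_of_ord b)%:R.

(* The binary sequence s_t = Tr(P(alpha^t + 1)), as an element of F_2
   (the trace takes values in {0,1}). *)
Definition trace_seq (F : finFieldType) (m : nat) (P : F -> F) (alpha : F)
  (t : nat) : 'F_2 :=
  if trace_abs m (P (alpha ^+ t + 1)) == 0 then 0 else 1.

Definition annihilates (s : nat -> 'F_2) (g : {poly 'F_2}) : Prop :=
  forall i : nat, ((size g).-1 <= i)%N ->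
    \sum_(j < size g) g`_j * s (i - j)%N = 0.

Definition is_seq_minpoly (s : nat -> 'F_2) (g : {poly 'F_2}) : Prop :=
  [/\ g`_0 = 1, annihilates s g &
      forall h : {poly 'F_2}, h`_0 = 1 -> annihilates s h -> (size g <= size h)%N].

Definition is_minpoly_F2 (F : finFieldType) (beta : F) (p : {poly 'F_2}) : Prop :=
  [/\ p \is monic, root (map_poly (@F2_to F) p) beta &
      forall q : {poly 'F_2}, q != 0 -> root (map_poly (@F2_to F) q) beta ->
        (size p <= size q)%N].

(* The binary cyclic code of length n generated by g: the ideal generated
   by g in F_2[x]/(x^n - 1), words identified with row vectors of length n. *)
Definition cyclic_code (n : nat) (g : {poly 'F_2}) : {set 'rV['F_2]_n} :=
  [set poly_rV ((rVpoly q * g) %% ('X^n - 1)) | q : 'rV['F_2]_n].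

Definition hweight (n : nat) (c : 'rV['F_2]_n) : nat :=
  #|[set i : 'I_n | c 0 i != 0]|.

Definition has_params (n : nat) (C : {set 'rV['F_2]_n}) (k d : nat) : Prop :=
  [/\ #|C| = (2 ^ k)%N,
      exists2 c, c \in C & (c != 0) && (hweight c == d) &
      forall c, c \in C -> c != 0 -> (d <= hweight c)%N].

From HB Require Import structures.
From mathcomp Require Import all_boot all_order all_algebra all_field.
From mathcomp Require Import zify ring.
Set Implicit Arguments. Unset Strict Implicit. Unset Printing Implicit Defensive.
Import GRing.Theory.
Local Open Scope ring_scope.

(** When m = 2h + 1, 2^h (2^m - 2^(h+1) + 1) = 2^(h+1) - 1 modulo 2^m - 1, so the
    last two monomials of f_1 are Frobenius conjugates and their traces cancel:
    s_t = Tr(a^t + 1) = 1 + sum_k (a^(2^k))^t is a power sum over the m + 1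
    distinct elements 1, a, a^2, ..., a^(2^(m-1)).  A recurrence polynomial
    annihilates such a sequence iff it vanishes at their inverses, so the minimal
    polynomial is (x - 1) m_{a^-1}(x), of degree m + 1.  The code words are the
    polynomials vanishing at 1 and at the primitive root a^-1: the first forces
    even weight, the second excludes weight 2, and 1 + x + x^2 + x^k with
    a^-k = 1 + a^-1 + a^-2 has weight 4. *)

Lemma F2_pow2 k (a : 'F_2) : a ^+ (2 ^ k) = a.
Proof.
elim: k => [|k IHk]; first by rewrite expr1.
by rewrite expnSr exprM IHk -{2}(expf_card a) card_Fp.
Qed.

Lemma F2_neq0 (a : 'F_2) : a != 0 -> a = 1.
Proof. by case: a => [[|[|a]] ?] // _; apply: val_inj. Qed.

Section Characteristic2.

Variable F : finFieldType.
Hypothesis pchar2F : 2%N \in [pchar F].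

Lemma exprD_pow2 k (x y : F) : (x + y) ^+ (2 ^ k) = x ^+ (2 ^ k) + y ^+ (2 ^ k).
Proof. by apply: exprDn_pchar; rewrite pnatX (eq_pnat _ (pcharf_eq pchar2F)). Qed.

Lemma expr_pow2_sum k (I : Type) (r : seq I) (a : I -> F) :
  (\sum_(i <- r) a i) ^+ (2 ^ k) = \sum_(i <- r) a i ^+ (2 ^ k).
Proof. by apply: (big_morph _ (exprD_pow2 k)); rewrite expr0n expn_eq0. Qed.

(* [F2_to] under a name keyed on the characteristic hypothesis, so that it can
   carry canonical ring-morphism instances. *)
Definition F2_embed of 2%N \in [pchar F] := @F2_to F.
Arguments F2_embed : simpl never.

Local Notation toF := (F2_embed pchar2F).

Lemma F2_embed_is_nmod_morphism : nmod_morphism toF.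
Proof.
by split=> [|a b]; rewrite /F2_embed /F2_to //= (GRing.natr_mod_pchar pchar2F) natrD.
Qed.

Lemma F2_embed_is_monoid_morphism : monoid_morphism toF.
Proof.
by split=> [|a b]; rewrite /F2_embed /F2_to //= (GRing.natr_mod_pchar pchar2F) natrM.
Qed.

HB.instance Definition _ := GRing.isNmodMorphism.Build _ _ _ F2_embed_is_nmod_morphism.
HB.instance Definition _ := GRing.isMonoidMorphism.Build _ _ _ F2_embed_is_monoid_morphism.

Lemma horner_map_F2_pow2 k (p : {poly 'F_2}) (x : F) :
  (map_poly toF p).[x] ^+ (2 ^ k) = (map_poly toF p).[x ^+ (2 ^ k)].
Proof.
rewrite !horner_coef expr_pow2_sum; apply: eq_bigr => i _.
by rewrite exprMn coef_map -rmorphXn F2_pow2 exprAC.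
Qed.

End Characteristic2.

Lemma expf_eq_modn (F : finFieldType) (x : F) a b : (0 < a)%N -> (0 < b)%N ->
  a = b %[mod #|F|.-1] -> x ^+ a = x ^+ b.
Proof.
move=> a_gt0 b_gt0 eq_ab; have [->|x_neq0] := eqVneq x 0.
  by rewrite !expr0n !eqn0Ngt a_gt0 b_gt0.
have x_unity : x ^+ #|F|.-1 = 1.
  apply: (mulfI x_neq0); rewrite -exprS prednK ?expf_card ?mulr1 //.
  by apply/card_gt0P; exists 0.
by rewrite -(expr_mod a x_unity) eq_ab expr_mod.
Qed.

Lemma prim_root_neq0 (R : nzRingType) n (z : R) : n.-primitive_root z -> z != 0.
Proof.
move=> z_prim; apply/eqP => z0; have := prim_expr_order z_prim.
by rewrite z0 expr0n gtn_eqF ?(prim_order_gt0 z_prim) // => /eqP; rewrite eq_sym oner_eq0.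
Qed.

Lemma prim_expr_neq1 (R : nzRingType) n (z : R) k :
  n.-primitive_root z -> (0 < k < n)%N -> z ^+ k != 1.
Proof. by move=> z_prim /andP[k_gt0 lt_kn]; rewrite -(prim_order_dvd z_prim) gtnNdvd. Qed.

Lemma prim_root_inv (R : fieldType) n (z : R) :
  n.-primitive_root z -> n.-primitive_root z^-1.
Proof.
move=> z_prim; have n_gt0 := prim_order_gt0 z_prim.
have -> : z^-1 = z ^+ n.-1.
  apply: (mulIf (prim_root_neq0 z_prim)); rewrite mulVf ?(prim_root_neq0 z_prim) //.
  by rewrite -exprSr prednK ?prim_expr_order.
by rewrite (prim_root_exp_coprime _ z_prim) -[X in coprime _ X]prednK // coprimenS.
Qed.

Section AbsoluteTrace.

Variables (F : finFieldType) (m : nat).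
Hypotheses (cardF : #|F| = (2 ^ m)%N) (m_gt0 : (0 < m)%N).

Lemma pchar2_card : 2%N \in [pchar F].
Proof. exact: card_finPcharP cardF _. Qed.

Local Notation Tr := (trace_abs m).
Local Notation toF := (F2_embed pchar2_card).

Lemma traceD (x y : F) : Tr (x + y) = Tr x + Tr y.
Proof.
by rewrite /trace_abs -big_split; apply: eq_bigr => i _; rewrite exprD_pow2 ?pchar2_card.
Qed.

Lemma trace_sqr (x : F) : Tr (x ^+ 2) = Tr x.
Proof.
rewrite /trace_abs; case: m m_gt0 cardF => // m' _ cardF'.
rewrite big_ord_recr big_ord_recl /= -exprM -expnS -cardF' expf_card expr1 addrC.
by congr (_ + _); apply: eq_bigr => i _; rewrite -exprM -expnS.
Qed.

Lemma trace_pow2 k (x : F) : Tr (x ^+ (2 ^ k)) = Tr x.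
Proof. by elim: k => [|k IHk]; rewrite ?expr1 // expnSr exprM trace_sqr. Qed.

Lemma trace1 : Tr (1 : F) = m%:R.
Proof.
rewrite /trace_abs (eq_bigr (fun=> 1)) ?sumr_const ?card_ord // => i _.
exact: expr1n.
Qed.

Lemma trace_F2 (x : F) : Tr x = 0 \/ Tr x = 1.
Proof.
have trace_idem : Tr x ^+ 2 = Tr x.
  rewrite -{2}(trace_sqr x) /trace_abs.
  have := expr_pow2_sum pchar2_card 1 (index_enum 'I_m) (fun i => x ^+ (2 ^ i)).
  by rewrite expn1 => ->; apply: eq_bigr => i _; rewrite -!exprM mulnC.
have /eqP : Tr x * (Tr x - 1) = 0 by rewrite mulrBr mulr1 -expr2 trace_idem subrr.
by rewrite mulf_eq0 subr_eq0 => /orP[]/eqP; [left | right].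
Qed.

Lemma F2_embed_trace_seq (P : F -> F) (alpha : F) t :
  toF (trace_seq m P alpha t) = Tr (P (alpha ^+ t + 1)).
Proof.
rewrite /trace_seq; case: eqP => [->|]; first exact: rmorph0.
by case: (trace_F2 (P (alpha ^+ t + 1))) => // -> _; rewrite rmorph1.
Qed.

End AbsoluteTrace.

Lemma power_sums_eq0 (F : fieldType) (I : finType) (gam c : I -> F) :
  injective gam -> (forall t, \sum_i gam i ^+ t * c i = 0) -> forall i, c i = 0.
Proof.
move=> gam_inj sums0 i0.
have sumsQ (Q : {poly F}) : \sum_i Q.[gam i] * c i = 0.
  under eq_bigr do rewrite horner_coef mulr_suml.
  rewrite exchange_big big1 // => t _.
  under eq_bigr do rewrite -mulrA.
  by rewrite -mulr_sumr sums0 mulr0.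
pose Q := \prod_(i | i != i0) ('X - (gam i)%:P).
have Q_gam i : i != i0 -> Q.[gam i] = 0.
  by move=> ii0; rewrite horner_prod (bigD1 i) //= hornerXsubC subrr mul0r.
have Q_gam0 : Q.[gam i0] != 0.
  rewrite horner_prod; apply/prodf_neq0 => i ii0.
  by rewrite hornerXsubC subr_eq0 (inj_eq gam_inj) eq_sym.
have := sumsQ Q; rewrite (bigD1 i0) //= big1 ?addr0 => [/eqP|i /Q_gam -> ].
  by rewrite mulf_eq0 (negPf Q_gam0) => /eqP.
by rewrite mul0r.
Qed.

Section PowerSumSequence.

Variables (F : finFieldType) (pchar2F : 2%N \in [pchar F]).
Local Notation toF := (F2_embed pchar2F).

Variables (I : finType) (gam : I -> F).
Hypotheses (gam_inj : injective gam) (gam_neq0 : forall i, gam i != 0).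
Variable s : nat -> 'F_2.
Hypothesis F2_embed_power_sums : forall t, toF (s t) = \sum_i gam i ^+ t.

Lemma F2_embed_recurrence (p : {poly 'F_2}) k : ((size p).-1 <= k)%N ->
  toF (\sum_(j < size p) p`_j * s (k - j)) =
  \sum_i gam i ^+ k * (map_poly toF p).[(gam i)^-1].
Proof.
move=> size_p; rewrite rmorph_sum /=.
under eq_bigr => j _ do rewrite rmorphM /= F2_embed_power_sums mulr_sumr.
rewrite exchange_big /=; apply: eq_bigr => i _.
rewrite (@horner_coef_wide _ (size p)) ?size_map_poly // mulr_sumr; apply: eq_bigr => j _.
have le_jk : (j <= k)%N.
  by rewrite (leq_trans _ size_p) // -ltnS prednK ?(leq_ltn_trans _ (ltn_ord j)).
by rewrite coef_map exprB ?unitfE // exprVn mulrCA mulrA.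
Qed.

Lemma annihilatesP (p : {poly 'F_2}) :
  annihilates s p <-> forall i, root (map_poly toF p) (gam i)^-1.
Proof.
split=> [ann_p i|roots_p k le_k]; last first.
  apply: (fmorph_inj toF); rewrite /= F2_embed_recurrence // rmorph0 big1 // => i _.
  by rewrite (eqP (roots_p i)) mulr0.
pose L := (size p).-1; apply/eqP.
suff /eqP : gam i ^+ L * (map_poly toF p).[(gam i)^-1] = 0.
  by rewrite mulf_eq0 expf_eq0 (negPf (gam_neq0 i)) andbF => /eqP.
pose c j := gam j ^+ L * (map_poly toF p).[(gam j)^-1].
apply: (power_sums_eq0 (c := c) gam_inj) => t.
rewrite -[RHS](rmorph0 toF) -(ann_p (L + t)%N) ?leq_addr //= F2_embed_recurrence ?leq_addr //.
by apply: eq_bigr => j _; rewrite mulrA -exprD addnC.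
Qed.

Lemma annihilator_size (p : {poly 'F_2}) :
  annihilates s p -> p`_0 = 1 -> (#|I| < size p)%N.
Proof.
move=> /annihilatesP roots_p p0.
have p_neq0 : p != 0 by apply: contra_eq_neq p0 => ->; rewrite coef0 eq_sym oner_eq0.
rewrite -(size_map_poly toF) cardE -(size_map (fun i => (gam i)^-1)).
apply: max_poly_roots; first by rewrite map_poly_eq0.
  by apply/allP => _ /mapP[i _ ->].
by rewrite map_inj_uniq ?enum_uniq // => i j /invr_inj /gam_inj.
Qed.

End PowerSumSequence.

Section MinimalPolynomial.

Variables (F : finFieldType) (pchar2F : 2%N \in [pchar F]).
Local Notation toF := (F2_embed pchar2F).

Variables (beta : F) (mp : {poly 'F_2}).
Hypothesis mpP : is_minpoly_F2 beta mp.

Lemma minpoly_neq0 : mp != 0.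
Proof. by case: mpP => /monic_neq0. Qed.

Lemma root_minpoly : root (map_poly toF mp) beta.
Proof. by case: mpP. Qed.

Lemma minpoly_min q : q != 0 -> root (map_poly toF q) beta -> (size mp <= size q)%N.
Proof. by case: mpP => _ _; apply. Qed.

Lemma minpoly_dvdp p : root (map_poly toF p) beta -> mp %| p.
Proof.
move=> root_p; apply/modp_eq0P/eqP; apply: contraT => r_neq0.
have root_r : root (map_poly toF (p %% mp)) beta.
  move: root_p; rewrite {1}(divp_eq p mp) rmorphD rmorphM /= !rootE hornerD hornerM.
  by rewrite (eqP root_minpoly) mulr0 add0r.
by have := minpoly_min r_neq0 root_r; rewrite leqNgt ltn_modp minpoly_neq0.
Qed.

Lemma root_minpoly_pow2 k : root (map_poly toF mp) (beta ^+ (2 ^ k)).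
Proof. by rewrite rootE -horner_map_F2_pow2 (eqP root_minpoly) expr0n expn_eq0. Qed.

Lemma minpoly_coef0 : beta != 0 -> mp`_0 = 1.
Proof.
move=> beta_neq0; apply: F2_neq0; apply/eqP => mp0.
have /factor_theorem[q mpE] : root mp 0 by rewrite rootE horner_coef0 mp0.
have q_neq0 : q != 0 by apply: contra_neq minpoly_neq0; rewrite mpE => ->; rewrite mul0r.
have /(dvdp_leq q_neq0) : mp %| q.
  apply: minpoly_dvdp; move: root_minpoly.
  by rewrite mpE rmorphM /= map_polyXsubC rootM root_XsubC rmorph0 (negPf beta_neq0) orbF.
by rewrite mpE size_mul ?polyXsubC_eq0 // size_XsubC addn2 ltnn.
Qed.

Lemma size_minpoly m : #|F| = (2 ^ m)%N -> (size mp <= m.+1)%N.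
Proof.
move=> cardF; pose ev (v : 'rV['F_2]_m.+1) := (map_poly toF (rVpoly v)).[beta].
have /injectivePn[v [w v_neq_w ev_vw]] : ~~ injectiveb ev.
  apply/injectiveP => /leq_card; rewrite card_mx card_Fp // mul1n cardF.
  by rewrite leq_exp2l // ltnn.
have vw_neq0 : rVpoly (v - w) != 0.
  apply: contra v_neq_w => /eqP vw0; rewrite -subr_eq0; apply/eqP.
  by rewrite -[v - w]rVpolyK vw0 linear0.
apply: leq_trans (minpoly_min vw_neq0 _) (size_poly _ _).
by rewrite rootE linearB /= rmorphB /= hornerD hornerN -/(ev v) -/(ev w) ev_vw subrr.
Qed.

Lemma XsubC1_minpoly_dvdpE p : beta != 1 ->
  (('X - 1) * mp %| p) = root p 1 && root (map_poly toF p) beta.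
Proof.
move=> beta_neq1; apply/idP/andP => [/dvdpP[q ->]|[/factor_theorem[q ->]]].
  by rewrite !rmorphM /= !rootM root_minpoly -polyC1 root_XsubC eqxx !orbT.
rewrite rmorphM /= map_polyXsubC rootM root_XsubC rmorph1 (negPf beta_neq1) orbF.
by move=> /minpoly_dvdp; rewrite polyC1 mulrC dvdp_mul2r // polyXsubC_eq0.
Qed.

End MinimalPolynomial.

Section CyclicCode.

Variables (n : nat) (g : {poly 'F_2}).
Hypotheses (n_gt0 : (0 < n)%N) (g_dvd : g %| 'X^n - 1).

Let size_Xn1 : size ('X^n - 1 : {poly 'F_2}) = n.+1.
Proof. by rewrite -polyC1 size_XnsubC. Qed.

Lemma mem_cyclic_code c : (c \in cyclic_code n g) = (g %| rVpoly c).
Proof.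
apply/imsetP/idP => [[q _ ->]|g_c].
  rewrite poly_rV_K; first by rewrite -(dvdp_mod _ g_dvd) dvdp_mull.
  by rewrite -ltnS -size_Xn1 ltn_modp -size_poly_eq0 size_Xn1.
exists (poly_rV (rVpoly c %/ g)) => //.
rewrite poly_rV_K; last exact: leq_trans (leq_divp _ _) (size_poly _ _).
by rewrite divpK // modp_small ?rVpolyK // size_Xn1 ltnS size_poly.
Qed.

Lemma card_cyclic_code k : (size g + k = n.+1)%N -> #|cyclic_code n g| = (2 ^ k)%N.
Proof.
move=> size_gk; have g_neq0 : g != 0.
  by apply: contraTneq g_dvd => ->; rewrite dvd0p -size_poly_eq0 size_Xn1.
pose enc (b : 'rV['F_2]_k) : 'rV['F_2]_n := poly_rV (rVpoly b * g).
have size_enc (b : 'rV_k) : (size (rVpoly b * g)%R <= n)%N.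
  apply: leq_trans (size_polyMleq _ _) _.
  by have : (size (rVpoly b) <= k)%N := size_poly _ _; lia.
have -> : cyclic_code n g = [set enc b | b : 'rV['F_2]_k].
  apply/setP => c; rewrite mem_cyclic_code; apply/idP/imsetP => [g_c|[b _ ->]].
    exists (poly_rV (rVpoly c %/ g)) => //; rewrite /enc poly_rV_K ?divpK ?rVpolyK //.
    rewrite size_divp // -subn1; have : (size (rVpoly c) <= n)%N := size_poly _ _.
    (* [set] identifies syntactically different instances of the same sizes for [lia] *)
    by move: size_gk; set a := size g; set b := size (rVpoly c); lia.
  by rewrite poly_rV_K ?dvdp_mull.
rewrite card_imset ?card_mx ?card_Fp ?mul1n // => b b' /(congr1 rVpoly).
by rewrite !poly_rV_K // => /(mulIf g_neq0)/(can_inj rVpolyK).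
Qed.

End CyclicCode.

Section HammingWeight.

Variable n : nat.
Implicit Type c : 'rV['F_2]_n.

Lemma horner_map_rVpoly (R : nzRingType) (f : {rmorphism 'F_2 -> R}) c (x : R) :
  (map_poly f (rVpoly c)).[x] = \sum_(i in [set i | c 0 i != 0]) x ^+ i.
Proof.
rewrite (@horner_coef_wide _ n) ?size_map_poly ?size_poly // [RHS]big_mkcond /=.
apply: eq_bigr => i _; rewrite coef_map coef_rVpoly_ord inE.
by case: eqP => [->|/eqP/F2_neq0 ->]; rewrite /= ?rmorph0 ?rmorph1 ?mul0r ?mul1r.
Qed.

Lemma hweight_eq0 c : hweight c = 0%N -> c = 0.
Proof.
move/cards0_eq => supp0; apply/rowP => i; rewrite mxE; apply/eqP.
by have := in_set0 i; rewrite -supp0 inE => /negbFE.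
Qed.

Lemma root1_hweight c : root (rVpoly c) 1 -> (2 %| hweight c)%N.
Proof.
rewrite (dvdn_pcharf (pchar_Fp (isT : prime 2))) rootE.
rewrite -[rVpoly c](@map_poly_id _ idfun) // horner_map_rVpoly.
by rewrite (eq_bigr (fun=> 1)) ?sumr_const // => i _; rewrite expr1n.
Qed.

Variables (F : finFieldType) (pchar2F : 2%N \in [pchar F]).
Local Notation toF := (F2_embed pchar2F).

Variable beta : F.
Hypothesis beta_prim : n.-primitive_root beta.

Lemma root_prim_hweight_neq2 c : root (map_poly toF (rVpoly c)) beta -> hweight c != 2%N.
Proof.
rewrite rootE horner_map_rVpoly => sum0; apply/cards2P => -[i [j [neq_ij suppE]]].
move: sum0; rewrite suppE big_setU1 ?inE //= big_set1 addr_eq0 (oppr_pchar2 pchar2F).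
rewrite (eq_prim_root_expr beta_prim) !modn_small // => /eqP/val_inj/eqP.
by rewrite (negPf neq_ij).
Qed.

Lemma hweight_ge4 c : c != 0 -> root (rVpoly c) 1 ->
  root (map_poly toF (rVpoly c)) beta -> (4 <= hweight c)%N.
Proof.
move=> c_neq0 /root1_hweight even_c /root_prim_hweight_neq2 neq2_c.
have neq0_c : hweight c != 0%N by apply: contra_neq c_neq0; apply: hweight_eq0.
by move: even_c neq2_c neq0_c; case: (hweight c) => [|[|[|[|w]]]].
Qed.

End HammingWeight.

Section WeightFourWord.

Variables (F : finFieldType) (pchar2F : 2%N \in [pchar F]).
Local Notation toF := (F2_embed pchar2F).

Variables (n : nat) (beta : F).
Hypotheses (cardF : #|F| = n.+1) (beta_prim : n.-primitive_root beta) (n_gt3 : (3 < n)%N).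

Lemma prim_expr_trinomial : exists2 k : 'I_n, (2 < k)%N & beta ^+ k = 1 + beta + beta ^+ 2.
Proof.
set x := 1 + beta + beta ^+ 2.
have beta_neq0 := prim_root_neq0 beta_prim.
have beta1_neq0 : 1 + beta != 0.
  rewrite addr_eq0 (oppr_pchar2 pchar2F) eq_sym -[beta]expr1.
  by rewrite (prim_expr_neq1 beta_prim) //; lia.
have x_neq0 : x != 0.
  have cubeE : beta ^+ 3 - 1 = (beta - 1) * x by rewrite /x; ring.
  apply: contra_neq (prim_expr_neq1 beta_prim (_ : 0 < 3 < n)%N) => [x0|]; last by lia.
  by apply/eqP; rewrite -subr_eq0 cubeE x0 mulr0.
have /(prim_rootP beta_prim)[k xE] : x ^+ n = 1.
  by apply: (mulfI x_neq0); rewrite -exprS -cardF expf_card mulr1.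
exists k => //; rewrite ltnNge; apply/negP => le_k2.
have : x - beta ^+ k = 0 by rewrite xE subrr.
(* for k <= 2 the difference factors through beta and 1 + beta (characteristic 2) *)
case: k le_k2 {xE} => [[|[|[|k]]] //= _ _].
- by apply/eqP; rewrite expr0 (_ : x - 1 = beta * (1 + beta)) /x ?mulf_neq0 //; ring.
- have -> : x - beta ^+ 1 = (1 + beta) ^+ 2 - (beta + beta) by rewrite /x; ring.
  by apply/eqP; rewrite addrr_pchar2 // subr0 expf_neq0.
- by apply/eqP; rewrite (_ : x - beta ^+ 2 = 1 + beta) /x //; ring.
Qed.

Lemma weight4_word : exists c : 'rV['F_2]_n,
  [/\ c != 0, (hweight c <= 4)%N, root (rVpoly c) 1 & root (map_poly toF (rVpoly c)) beta].
Proof.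
have [k k_gt2 betak] := prim_expr_trinomial.
pose p : {poly 'F_2} := 1 + 'X + 'X^2 + 'X^k.
have size_p : (size p <= n)%N.
  have sizeD (q r : {poly 'F_2}) :
      (size q <= n)%N -> (size r <= n)%N -> (size (q + r)%R <= n)%N.
    by move=> q_n r_n; apply: leq_trans (size_polyD _ _) _; rewrite geq_max q_n.
  by rewrite /p !sizeD ?size_poly1 ?size_polyX ?size_polyXn //; lia.
have pE i : p`_i = ((i == 0) + (i == 1) + (i == 2) + (i == k))%N%:R.
  by rewrite /p !coefD coef1 coefX !coefXn !natrD.
have n_gt2 : (2 < n)%N by lia.
pose supp4 := [:: Ordinal (ltnW (ltnW n_gt2)); Ordinal (ltnW n_gt2); Ordinal n_gt2; k].
exists (poly_rV p); rewrite poly_rV_K //; split.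
- apply/negP => /eqP/rowP/(_ (Ordinal (ltnW (ltnW n_gt2)))).
  by rewrite !mxE pE /= eq_sym gtn_eqF ?(leq_trans _ k_gt2) // => /eqP; rewrite oner_eq0.
- apply: leq_trans (subset_leq_card (_ : _ \subset [set i in supp4])) _; last first.
    by rewrite cardsE (card_size supp4).
  apply/subsetP => i; rewrite !inE mxE pE; apply: contraR.
  by rewrite -!val_eqE /= => /norP[/negPf-> /norP[/negPf-> /norP[/negPf-> /negPf->]]].
- by rewrite rootE /p !hornerE !expr1n.
- rewrite rootE /p !rmorphD /= rmorph1 map_polyX !map_polyXn !hornerE betak.
  by rewrite addrr_pchar2.
Qed.

End WeightFourWord.

Section Theorem1.

Variables (F : finFieldType) (m h : nat) (alpha : F).
Hypotheses (hm : m = (2 * h + 1)%N) (m_ge3 : (3 <= m)%N) (cardF : #|F| = (2 ^ m)%N).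
Hypothesis alpha_prim : (2 ^ m - 1)%N.-primitive_root alpha.

Local Notation n := (2 ^ m - 1)%N.
Local Notation Tr := (trace_abs m).
Local Notation f1 := (fun x : F => x + x ^+ (2 ^ h.+1 - 1) + x ^+ (2 ^ m - 2 ^ h.+1 + 1)).
Local Notation s := (trace_seq m f1 alpha).

Let m_gt0 : (0 < m)%N. Proof. lia. Qed.
Let pchar2F := pchar2_card cardF.
Local Notation toF := (F2_embed pchar2F).

Let two_pow_m_ge8 : (8 <= 2 ^ m)%N.
Proof. by have : (2 ^ 3 <= 2 ^ m)%N by rewrite leq_exp2l. Qed.

Lemma card_F : #|F| = n.+1.
Proof. by rewrite cardF subn1 prednK ?expn_gt0. Qed.

Lemma f1_exponent_conj :
  ((2 ^ m - 2 ^ h.+1 + 1) * 2 ^ h = 2 ^ h.+1 - 1 %[mod #|F|.-1])%N.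
Proof.
rewrite card_F /=.
have -> : ((2 ^ m - 2 ^ h.+1 + 1) * 2 ^ h = 2 ^ h.+1 - 1 + (2 ^ h - 1) * n)%N.
  have two_pow_m : (2 ^ m = 2 * 2 ^ h * 2 ^ h)%N.
    by rewrite hm addn1 expnS -mulnA -expnD addnn -mul2n.
  rewrite two_pow_m expnS; have := expn_gt0 2 h; nia.
by rewrite addnC modnMDl.
Qed.

Lemma trace_f1 (y : F) : Tr (f1 y) = Tr y.
Proof.
rewrite !(traceD cardF) -[in X in _ + X](trace_pow2 cardF m_gt0 h) -exprM.
rewrite (expf_eq_modn _ _ _ f1_exponent_conj); last 2 first.
- by rewrite muln_gt0 expn_gt0 addn1.
- by rewrite subn_gt0 -[1%N](expn0 2) ltn_exp2l.
by rewrite -addrA addrr_pchar2 ?addr0.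
Qed.

Lemma pow2_lt_n k : (k < m)%N -> (2 ^ k < n)%N.
Proof.
move=> lt_km; have : (2 ^ k.+1 <= 2 ^ m)%N by rewrite leq_exp2l.
by rewrite expnS; lia.
Qed.

Definition seq_root (r : 'I_m.+1) : F := if val r is k.+1 then alpha ^+ (2 ^ k) else 1.

Lemma seq_root_neq0 r : seq_root r != 0.
Proof.
rewrite /seq_root; case: (val r) => [|k]; first exact: oner_neq0.
by rewrite expf_neq0 ?(prim_root_neq0 alpha_prim).
Qed.

Lemma seq_root_inj : injective seq_root.
Proof.
pose e (r : 'I_m.+1) := if val r is k.+1 then (2 ^ k)%N else 0%N.
have e_lt r : (e r < n)%N by rewrite /e; case: r => [[|k] /= lt_km]; rewrite ?pow2_lt_n //; lia.
have seq_rootE r : seq_root r = alpha ^+ e r by rewrite /seq_root /e; case: (val r).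
move=> r1 r2; rewrite !seq_rootE => /eqP; rewrite (eq_prim_root_expr alpha_prim).
rewrite !modn_small // /e => /eqP e_eq; apply: val_inj.
case: r1 r2 e_eq => [[|k1] ?] [[|k2] ?] //= e_eq.
- by have := expn_gt0 2 k2; rewrite -e_eq.
- by have := expn_gt0 2 k1; rewrite e_eq.
- by rewrite (expnI _ e_eq).
Qed.

Lemma F2_embed_s t : toF (s t) = \sum_r seq_root r ^+ t.
Proof.
have trace_one : Tr (1 : F) = 1.
  by rewrite trace1 hm natrD natrM (pcharf0 pchar2F) mul0r add0r.
rewrite (F2_embed_trace_seq cardF m_gt0) (trace_f1 (alpha ^+ t + 1)) (traceD cardF) trace_one.
rewrite big_ord_recl /= expr1n addrC; congr (_ + _).
by apply: eq_bigr => k _; rewrite exprAC.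
Qed.

Variable mp : {poly 'F_2}.
Hypothesis mpP : is_minpoly_F2 alpha^-1 mp.

Local Notation beta := alpha^-1.
Local Notation g := (('X - 1) * mp).

Let beta_prim : n.-primitive_root beta := prim_root_inv alpha_prim.

Lemma beta_neq1 : beta != 1.
Proof. by rewrite -[beta]expr1 (prim_expr_neq1 beta_prim) //; lia. Qed.

Lemma dvdp_gE p : (g %| p) = root p 1 && root (map_poly toF p) beta.
Proof. exact: (XsubC1_minpoly_dvdpE pchar2F mpP p beta_neq1). Qed.

Lemma annihilates_g : annihilates s g.
Proof.
apply/(annihilatesP seq_root_inj seq_root_neq0 F2_embed_s) => r.
rewrite rmorphM rmorphB /= map_polyX rmorph1 -polyC1 rootM root_XsubC /seq_root.
case: (val r) => [|k]; first by rewrite invr1 eqxx.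
by rewrite -exprVn root_minpoly_pow2 ?orbT.
Qed.

Lemma g_coef0 : g`_0 = 1.
Proof.
rewrite coef0M (minpoly_coef0 pchar2F mpP) ?invr_eq0 ?(prim_root_neq0 alpha_prim) //.
by rewrite mulr1 coefB coefX coef1 sub0r (oppr_pchar2 (pchar_Fp _)).
Qed.

Lemma size_g : size g = m.+2.
Proof.
apply/eqP; rewrite eqn_leq -[X in (X < _)%N](card_ord m.+1).
rewrite (annihilator_size seq_root_inj seq_root_neq0 F2_embed_s annihilates_g g_coef0) andbT.
rewrite -polyC1 size_mul ?polyXsubC_eq0 ?(minpoly_neq0 mpP) // size_XsubC add2n ltnS.
exact: (size_minpoly pchar2F mpP cardF).
Qed.

Lemma g_dvd_Xn1 : g %| 'X^n - 1.
Proof.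
rewrite dvdp_gE rmorphB /= map_polyXn rmorph1 !rootE !hornerE expr1n subrr eqxx /=.
by rewrite prim_expr_order ?subrr.
Qed.

Lemma is_seq_minpoly_g : is_seq_minpoly s g.
Proof.
split=> [||p p0 ann_p]; [exact: g_coef0 | exact: annihilates_g |].
rewrite size_g -[m.+1](card_ord m.+1).
exact: (annihilator_size seq_root_inj seq_root_neq0 F2_embed_s ann_p p0).
Qed.

Lemma mem_code c :
  (c \in cyclic_code n g) = root (rVpoly c) 1 && root (map_poly toF (rVpoly c)) beta.
Proof. by rewrite (mem_cyclic_code _ g_dvd_Xn1) ?dvdp_gE //; lia. Qed.

Lemma card_code : #|cyclic_code n g| = (2 ^ (2 ^ m - 2 - m))%N.
Proof.
have n_gt0 : (0 < n)%N by lia.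
apply: (card_cyclic_code n_gt0 g_dvd_Xn1); rewrite size_g.
have : (m.-1 < 2 ^ m.-1)%N by rewrite ltn_expl.
have : (2 ^ m = 2 * 2 ^ m.-1)%N by rewrite -expnS prednK.
lia.
Qed.

Lemma min_weight_code :
  exists2 c, c \in cyclic_code n g & (c != 0) && (hweight c == 4%N).
Proof.
have n_gt3 : (3 < n)%N by lia.
have [c [c_neq0 wt_c root1 root_beta]] := weight4_word pchar2F card_F beta_prim n_gt3.
exists c; first by rewrite mem_code root1.
by rewrite c_neq0 eqn_leq wt_c (hweight_ge4 beta_prim).
Qed.

Lemma hweight_code_ge4 c : c \in cyclic_code n g -> c != 0 -> (4 <= hweight c)%N.
Proof.
rewrite mem_code => /andP[root1 root_beta] c_neq0.
exact: (hweight_ge4 beta_prim c_neq0 root1 root_beta).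
Qed.

End Theorem1.

Theorem theorem1 (F : finFieldType) (m h : nat) (alpha : F)
  (hm : m = (2 * h + 1)%N) (h3 : (3 <= m)%N)
  (hF : #|F| = (2 ^ m)%N)
  (halpha : (2 ^ m - 1)%N.-primitive_root alpha) :
  let f1 := fun x : F =>
    x + x ^+ (2 ^ h.+1 - 1) + x ^+ (2 ^ m - 2 ^ h.+1 + 1) in
  let s := trace_seq m f1 alpha in
  forall mp : {poly 'F_2}, is_minpoly_F2 alpha^-1 mp ->
  let g := ('X - 1) * mp in
  is_seq_minpoly s g /\
  has_params (cyclic_code (2 ^ m - 1) g) (2 ^ m - 2 - m) 4.
Proof.
move=> f1 s mp mpP g; split; first exact: (is_seq_minpoly_g hm h3 hF halpha mpP).
split.
- exact: (card_code hm h3 hF halpha mpP).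
- exact: (min_weight_code hm h3 hF halpha mpP).
- exact: (hweight_code_ge4 hm h3 hF halpha mpP).
Qed.
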